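(* Let $F$ be a field of characteristic $0$ and let $b_1,\dots,b_n$ be indeterminates. Then in the field $F(b_1,\dots,b_n)$ of rational functions, \[\sum_{\sigma\in S_n}\frac{\operatorname{sgn}(\sigma)}{b_{\sigma(1)}(b_{\sigma(1)}+b_{\sigma(2)})\cdots(b_{\sigma(1)}+\cdots+b_{\sigma(n)})}=2^n\frac{\prod_{1\le i<j\le n}(b_j-b_i)}{\prod_{1\le i\le j\le n}(b_i+b_j)},\] where $S_n$ is the symmetric group on $n$ letters. *)

From HB Require Import structures.
From mathcomp Require Import all_boot all_order all_algebra all_fingroup.
From mathcomp Require Import fraction.
From mathcomp Require Import mpoly.
Set Implicit Arguments. Unset Strict Implicit. Unset Printing Implicit Defensive.
Import GRing.Theory.
Local Open Scope ring_scope.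

(* The field of rational functions F(b_1,...,b_n): the fraction field of the
   multivariate polynomial ring F[b_1,...,b_n] (indices shifted to 0..n-1). *)
Definition ratfun (F : fieldType) (n : nat) := {fraction {mpoly F[n]}}.

Definition bvar (F : fieldType) (n : nat) (i : 'I_n) : ratfun F n :=
  tofrac ('X_i : {mpoly F[n]}).

From HB Require Import structures.
From mathcomp Require Import all_boot all_order all_algebra all_fingroup.
From mathcomp Require Import fraction.
From mathcomp Require Import mpoly.
From mathcomp Require Import zify ring.
Set Implicit Arguments. Unset Strict Implicit. Unset Printing Implicit Defensive.
Import GRing.Theory.
Local Open Scope ring_scope.

(* The identity holds for any pairwise distinct x_1, ..., x_n in a field of
   characteristic not 2 whose nonempty subsums do not vanish, by induction
   on n.  Grouping the permutations by their value m = s(n), the last factor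
   of every denominator is the full sum S, and the remaining sum is the
   left-hand side for the variables other than x_m, with sign (-1)^(n-m).
   By induction, and since removing x_m from the Vandermonde product and from
   the product of pair sums costs the factors prod_(i<>m) (x_m - x_i) and
   prod_j (x_m + x_j), what remains to show is
     sum_m prod_j (x_m + x_j) / prod_(i<>m) (x_m - x_i) = 2 S.
   The left-hand side is the divided difference of order n of the polynomial
   prod_j (X + x_j) - prod_j (X - x_j), of degree at most n; by Lagrange
   interpolation it is its coefficient of X^n, namely 2 S. *)

Section LiftOrder.
Variables (n : nat) (m : 'I_n.+1).

Lemma ltn_lift (i j : 'I_n) : (lift m i < lift m j)%N = (i < j)%N.
Proof. rewrite /= /bump; case: (leqP m i); case: (leqP m j); lia. Qed.

Lemma leq_lift (i j : 'I_n) : (lift m i <= lift m j)%N = (i <= j)%N.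
Proof. rewrite /= /bump; case: (leqP m i); case: (leqP m j); lia. Qed.

Lemma ltn_pivot_lift (i : 'I_n) : (m < lift m i)%N = (m <= i)%N.
Proof. rewrite /= /bump; case: (leqP m i); lia. Qed.

Lemma leq_pivot_lift (i : 'I_n) : (m <= lift m i)%N = (m <= i)%N.
Proof. rewrite /= /bump; case: (leqP m i); lia. Qed.

Lemma ltn_lift_pivot (i : 'I_n) : (lift m i < m)%N = (i < m)%N.
Proof. rewrite /= /bump; case: (leqP m i); lia. Qed.

Lemma leq_lift_pivot (i : 'I_n) : (lift m i <= m)%N = (i < m)%N.
Proof. rewrite /= /bump; case: (leqP m i); lia. Qed.

End LiftOrder.

Lemma big_perm_lift (R : Type) (idx : R) (op : Monoid.com_law idx) n
    (i0 j0 : 'I_n.+1) (F : 'S_n.+1 -> R) :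
  \big[op/idx]_(s : 'S_n.+1 | s i0 == j0) F s
    = \big[op/idx]_(s : 'S_n) F (lift_perm i0 j0 s).
Proof.
rewrite (reindex (lift_perm i0 j0)); last first.
  pose ulsf i (s : 'S_n.+1) k := odflt k (unlift (s i) (s (lift i k))).
  have ulsfK i (s : 'S_n.+1) k : lift (s i) (ulsf i s k) = s (lift i k).
    rewrite /ulsf; have := neq_lift i k.
    by rewrite -(can_eq (permK s)) => /unlift_some[] ? ? ->.
  have inj_ulsf : injective (ulsf i0 _).
    move=> s; apply: can_inj (ulsf (s i0) s^-1%g) _ => k'.
    by rewrite {1}/ulsf ulsfK !permK liftK.
  exists (fun s => perm (inj_ulsf s)) => [s _ | s].
    by apply/permP=> k'; rewrite permE /ulsf lift_perm_lift lift_perm_id liftK.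
  move/(s _ =P _) => si0; apply/permP=> k.
  case: (unliftP i0 k) => [k'|] ->; rewrite ?lift_perm_id //.
  by rewrite lift_perm_lift -si0 permE ulsfK.
by apply: eq_bigl => s; rewrite lift_perm_id eqxx.
Qed.

Section PairProducts.
Variable R : comNzRingType.

Lemma prod_pairs_lift n (f : 'I_n.+1 -> 'I_n.+1 -> R) (r : nat -> nat -> bool)
    (m : 'I_n.+1) :
  (forall i j : 'I_n, r (lift m i) (lift m j) = r i j) ->
  \prod_(i < n.+1) \prod_(j < n.+1 | r i j) f i j
    = \prod_(j < n.+1 | r m j) f m j
      * \prod_(i < n | r (lift m i) m) f (lift m i) m
      * \prod_(i < n) \prod_(j < n | r i j) f (lift m i) (lift m j).
Proof.
move=> r_lift; rewrite (bigD1_ord m) //= -mulrA; congr (_ * _).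
rewrite (big_mkcond (fun i => r (lift m i) m)) -big_split /=.
apply: eq_bigr => i _; rewrite big_mkcond (bigD1_ord m) //=; congr (_ * _).
by rewrite [RHS]big_mkcond; apply: eq_bigr => j _; rewrite r_lift.
Qed.

Lemma prod_if_leq_const n m (c : R) :
  \prod_(i < n) (if (m <= i)%N then c else 1) = c ^+ (n - m).
Proof.
elim: n => [|n IHn]; first by rewrite big_ord0 sub0n expr0.
rewrite big_ord_recr /= IHn; case: leqP => [le_mn|lt_nm].
  by rewrite -exprSr subSn.
by rewrite mulr1; congr (_ ^+ _); lia.
Qed.

Definition vandermonde n (x : 'I_n -> R) :=
  \prod_(i < n) \prod_(j < n | (i < j)%N) (x j - x i).

Definition pair_sum_prod n (x : 'I_n -> R) :=
  \prod_(i < n) \prod_(j < n | (i <= j)%N) (x i + x j).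

Lemma vandermonde_lift n (x : 'I_n.+1 -> R) (m : 'I_n.+1) :
  vandermonde x = (-1) ^+ (n - m) * \prod_(i < n) (x m - x (lift m i))
                  * vandermonde (fun i => x (lift m i)).
Proof.
rewrite /vandermonde (@prod_pairs_lift n (fun i j => x j - x i) ltn m);
  last exact: ltn_lift.
congr (_ * _); rewrite big_mkcond (bigD1_ord m) //= ltnn mul1r.
rewrite [X in _ * X]big_mkcond -big_split -prod_if_leq_const -big_split /=.
apply: eq_bigr => i _; rewrite ltn_pivot_lift ltn_lift_pivot.
by case: leqP => _; rewrite ?mulr1 ?mulN1r ?opprB.
Qed.

Lemma pair_sum_prod_lift n (x : 'I_n.+1 -> R) (m : 'I_n.+1) :
  pair_sum_prod x = \prod_(j < n.+1) (x m + x j)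
                    * pair_sum_prod (fun i => x (lift m i)).
Proof.
rewrite /pair_sum_prod (@prod_pairs_lift n (fun i j => x i + x j) leq m);
  last exact: leq_lift.
congr (_ * _); rewrite big_mkcond (bigD1_ord m) //= leqnn.
rewrite (bigD1_ord m) //= -mulrA; congr (_ * _).
rewrite [X in _ * X]big_mkcond -big_split /=.
apply: eq_bigr => i _; rewrite leq_pivot_lift leq_lift_pivot.
by case: leqP => _; rewrite ?mulr1 ?mul1r // addrC.
Qed.

End PairProducts.

Section Interpolation.
Variable K : fieldType.

Lemma size_prod_XsubC_ord n (a : 'I_n -> K) :
  size (\prod_(i < n) ('X - (a i)%:P)) = n.+1.
Proof. by rewrite size_prod_XsubC -[in RHS](card_ord n) cardT enumT. Qed.

Lemma coef_prod_XsubC_top n (a : 'I_n -> K) :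
  (\prod_(i < n) ('X - (a i)%:P))`_n = 1.
Proof.
have /monicP := monic_prod_XsubC (index_enum 'I_n) predT a.
by rewrite lead_coefE size_prod_XsubC_ord.
Qed.

Lemma coef_prod_XsubC_subtop n (a : 'I_n.+1 -> K) :
  (\prod_(i < n.+1) ('X - (a i)%:P))`_n = - \sum_(i < n.+1) a i.
Proof.
have size_enum : size (index_enum 'I_n.+1) = n.+1.
  by rewrite -[RHS](card_ord n.+1) cardT enumT.
have := @coefPn_prod_XsubC K [seq a i | i <- index_enum 'I_n.+1].
by rewrite !big_map size_map size_enum; apply.
Qed.

Lemma interpolation_top_coef n (x : 'I_n.+1 -> K) (p : {poly K}) :
  injective x -> (size p <= n.+1)%N ->
  \sum_(m < n.+1) p.[x m] / \prod_(i < n) (x m - x (lift m i)) = p`_n.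
Proof.
move=> x_inj size_p.
pose node (m : 'I_n.+1) := \prod_(i < n) ('X - (x (lift m i))%:P).
have diff_neq0 (m : 'I_n.+1) : \prod_(i < n) (x m - x (lift m i)) != 0.
  apply/prodf_neq0 => i _; rewrite subr_eq0 (inj_eq x_inj).
  exact: neq_lift.
have node_x (m k : 'I_n.+1) :
    (node m).[x k] = if m == k then \prod_(i < n) (x m - x (lift m i)) else 0.
  rewrite horner_prod; have [<-|/eqP neq_mk] := eqP.
    by apply: eq_bigr => i _; rewrite hornerXsubC.
  have [k' ->] : exists k', k = lift m k'.
    by case: (unliftP m k) => [k' ->|eq_km]; [exists k' | rewrite eq_km eqxx in neq_mk].
  by rewrite (bigD1 k') //= hornerXsubC subrr mul0r.
pose q := \sum_(m < n.+1) (p.[x m] / \prod_(i < n) (x m - x (lift m i))) *: node m.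
have size_q : (size q <= n.+1)%N.
  apply: (big_ind (fun r : {poly K} => size r <= n.+1)%N); rewrite ?size_poly0 //.
    by move=> a b sa sb; apply: leq_trans (size_polyD _ _) _; rewrite geq_max sa.
  by move=> m _; apply: leq_trans (size_scale_leq _ _) _; rewrite size_prod_XsubC_ord.
have p_q : p = q.
  apply/eqP; rewrite -subr_eq0; apply/eqP.
  apply: (@roots_geq_poly_eq0 _ _ [seq x i | i <- enum 'I_n.+1]).
  - apply/allP => _ /mapP [k _ ->]; rewrite /root hornerD hornerN horner_sum.
    rewrite (bigD1 k) //= [X in _ - (_ + X)]big1 ?addr0.
      by rewrite hornerZ node_x eqxx divfK // subrr.
    by move=> m /negPf neq_mk; rewrite hornerZ node_x neq_mk mulr0.
  - by rewrite map_inj_uniq ?enum_uniq.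
  - rewrite size_map size_enum_ord; apply: leq_trans (size_polyD _ _) _.
    by rewrite size_polyN geq_max size_p.
rewrite [in RHS]p_q coef_sum; apply: eq_bigr => m _.
by rewrite coefZ coef_prod_XsubC_top mulr1.
Qed.

Lemma sum_pair_sums_div_diffs n (x : 'I_n.+1 -> K) : injective x ->
  \sum_(m < n.+1) \prod_(j < n.+1) (x m + x j) / \prod_(i < n) (x m - x (lift m i))
    = 2%:R * \sum_(i < n.+1) x i.
Proof.
move=> x_inj.
pose r := \prod_(j < n.+1) ('X - (- x j)%:P) - \prod_(j < n.+1) ('X - (x j)%:P).
have r_x m : r.[x m] = \prod_(j < n.+1) (x m + x j).
  rewrite /r hornerD hornerN !horner_prod.
  rewrite [X in _ - X](bigD1 m) //= hornerXsubC subrr mul0r subr0.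
  by apply: eq_bigr => j _; rewrite hornerXsubC opprK.
have size_r : (size r <= n.+1)%N.
  apply/leq_sizeP => j; rewrite leq_eqVlt => /orP[/eqP <-|lt_nj].
    by rewrite coefB !coef_prod_XsubC_top subrr.
  by rewrite coefB !nth_default ?subrr // size_prod_XsubC_ord.
under eq_bigr do rewrite -r_x.
rewrite interpolation_top_coef // coefB !coef_prod_XsubC_subtop sumrN opprK.
by rewrite mulr2n mulrDl mul1r.
Qed.

End Interpolation.

Section AltPrefixSum.
Variable K : fieldType.

Definition alt_prefix_sum n (x : 'I_n -> K) :=
  \sum_(s : 'S_n)
     (-1) ^+ odd_perm s / \prod_(k < n) (\sum_(i < n | (i <= k)%N) x (s i)).

Definition zero_free_subsums n (x : 'I_n -> K) :=
  forall A : {set 'I_n}, A != set0 -> \sum_(i in A) x i != 0.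

Lemma prefix_sum_lift_perm n (x : 'I_n.+1 -> K) (m : 'I_n.+1) (s : 'S_n)
    (k : 'I_n) :
  \sum_(i < n.+1 | (i <= k)%N) x (lift_perm ord_max m s i)
    = \sum_(i < n | (i <= k)%N) x (lift m (s i)).
Proof.
rewrite big_mkcond big_ord_recr /= leqNgt ltn_ord /= addr0.
rewrite [RHS]big_mkcond; apply: eq_bigr => i _.
have -> : widen_ord (leqnSn n) i = lift ord_max i.
  by apply: val_inj; rewrite /= /bump leqNgt ltn_ord.
by rewrite lift_perm_lift.
Qed.

Lemma alt_prefix_sum_rec n (x : 'I_n.+1 -> K) :
  alt_prefix_sum x = (\sum_i x i)^-1
    * \sum_(m < n.+1) (-1) ^+ (n - m) * alt_prefix_sum (fun i => x (lift m i)).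
Proof.
rewrite /alt_prefix_sum (partition_big (fun s : 'S_n.+1 => s ord_max) predT) //=.
rewrite big_distrr /=; apply: eq_bigr => m _.
rewrite big_perm_lift mulrCA big_distrr /= mulrC big_distrl /=.
apply: eq_bigr => s _.
have total_sum : \sum_(i < n.+1 | (i <= @ord_max n)%N)
    x (lift_perm ord_max m s i) = \sum_i x i.
  rewrite (eq_bigl predT) => [|i]; last exact: leq_ord.
  by rewrite [RHS](reindex_inj (@perm_inj _ (lift_perm ord_max m s))).
rewrite odd_lift_perm big_ord_recr /= total_sum.
under eq_bigr do rewrite prefix_sum_lift_perm.
have sign_m : (-1) ^+ (n - m) = (-1) ^+ (odd n (+) odd m) :> K.
  by rewrite -oddB ?signr_odd // -ltnS ltn_ord.
rewrite invfM sign_m signr_addb.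
set P := \prod_(i < n) _; set S := \sum_(i < n.+1) x i.
set a := (-1) ^+ _; set b := (-1) ^+ _.
by clearbody P S a b; ring.
Qed.

Lemma zero_free_subsums_lift n (x : 'I_n.+1 -> K) (m : 'I_n.+1) :
  zero_free_subsums x -> zero_free_subsums (fun i => x (lift m i)).
Proof.
move=> x_free A A_neq0; have := x_free (lift m @: A).
rewrite big_imset /= => [|i j _ _ /lift_inj //]; apply.
by rewrite imset_eq0.
Qed.

Lemma addr_neq0_subsums n (x : 'I_n -> K) : 2%:R != 0 :> K ->
  zero_free_subsums x -> forall i j, x i + x j != 0.
Proof.
move=> two_neq0 x_free i j; have [<-|neq_ij] := eqVneq i j.
  have := x_free [set i]; rewrite big_set1 -mulr2n -mulr_natl mulf_eq0.
  by rewrite negb_or two_neq0; apply; apply/set0Pn; exists i; rewrite inE.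
have := x_free [set i; j]; rewrite big_setU1 ?inE ?big_set1 //=; apply.
by apply/set0Pn; exists i; rewrite !inE eqxx.
Qed.

Lemma pair_sum_prod_neq0 n (x : 'I_n -> K) : 2%:R != 0 :> K ->
  zero_free_subsums x -> pair_sum_prod x != 0.
Proof.
move=> two_neq0 x_free; apply/prodf_neq0 => i _; apply/prodf_neq0 => j _.
exact: addr_neq0_subsums.
Qed.

Lemma vandermonde_div_pair_sum_prod_lift n (x : 'I_n.+1 -> K) (m : 'I_n.+1) (c : K) :
  2%:R != 0 :> K -> injective x -> zero_free_subsums x ->
  (-1) ^+ (n - m) * (c * vandermonde (fun i => x (lift m i))
                       / pair_sum_prod (fun i => x (lift m i)))
    = c * vandermonde x / pair_sum_prod x
      * (\prod_(j < n.+1) (x m + x j) / \prod_(i < n) (x m - x (lift m i))).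
Proof.
move=> two_neq0 x_inj x_free.
have diff_neq0 : \prod_(i < n) (x m - x (lift m i)) != 0.
  apply/prodf_neq0 => i _; rewrite subr_eq0 (inj_eq x_inj); exact: neq_lift.
have sums_neq0 : \prod_(j < n.+1) (x m + x j) != 0.
  by apply/prodf_neq0 => j _; apply: addr_neq0_subsums.
have := pair_sum_prod_neq0 two_neq0 (zero_free_subsums_lift m x_free).
rewrite (vandermonde_lift x m) (pair_sum_prod_lift x m).
move: diff_neq0 sums_neq0; set d := \prod_(i < n) _; set Q := \prod_(j < n.+1) _.
set V := vandermonde _; set P := pair_sum_prod _; set sg := (-1) ^+ _.
by clearbody d Q V P sg => d_neq0 Q_neq0 P_neq0; field; rewrite d_neq0 Q_neq0 P_neq0.
Qed.

Lemma alt_prefix_sumE n (x : 'I_n -> K) :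
  2%:R != 0 :> K -> injective x -> zero_free_subsums x ->
  alt_prefix_sum x = 2%:R ^+ n * vandermonde x / pair_sum_prod x.
Proof.
move=> two_neq0; elim: n x => [|n IHn] x x_inj x_free.
  rewrite /alt_prefix_sum /vandermonde /pair_sum_prod !big_ord0 expr0 mul1r divr1.
  rewrite (eq_bigr (fun _ => 1)) ?sumr_const ?card_Sn // => s _.
  have -> : s = 1%g by apply/permP => -[].
  by rewrite odd_perm1 big_ord0 expr0 divr1.
have sum_neq0 : \sum_(i < n.+1) x i != 0.
  have := x_free setT; rewrite (eq_bigl predT) => [|i]; last by rewrite inE.
  by apply; apply/set0Pn; exists ord0; rewrite inE.
have term_m (m : 'I_n.+1) :
    (-1) ^+ (n - m) * alt_prefix_sum (fun i => x (lift m i))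
    = 2%:R ^+ n * vandermonde x / pair_sum_prod x
      * (\prod_(j < n.+1) (x m + x j) / \prod_(i < n) (x m - x (lift m i))).
  rewrite IHn; [exact: vandermonde_div_pair_sum_prod_lift | by move=> i j /x_inj /lift_inj |].
  exact: zero_free_subsums_lift.
rewrite alt_prefix_sum_rec (eq_bigr _ (fun m _ => term_m m)) -big_distrr /=.
rewrite sum_pair_sums_div_diffs // exprS.
move: sum_neq0 (pair_sum_prod_neq0 two_neq0 x_free).
set S := \sum_(i < n.+1) x i; set V := vandermonde x; set P := pair_sum_prod x.
by clearbody S V P => S_neq0 P_neq0; field; rewrite S_neq0 P_neq0.
Qed.

End AltPrefixSum.

Section Indeterminates.
Variables (F : fieldType) (n : nat).

Lemma bvar_inj : injective (@bvar F n).
Proof.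
move=> i j /eqP; rewrite /bvar tofrac_eq => /eqP eq_ij.
have := congr1 (meval (fun k => (k == i)%:R)) eq_ij; rewrite !mevalXU eqxx.
by case: eqP => // _ /eqP; rewrite oner_eq0.
Qed.

Hypothesis charF0 : [pchar F] =i pred0.

Lemma ratfun_two_neq0 : 2%:R != 0 :> ratfun F n.
Proof.
rewrite -(rmorph_nat (@tofrac _)) tofrac_eq0 -mpolyC_nat mpolyC_eq0.
by rewrite ((pcharf0P _).1 charF0).
Qed.

Lemma bvar_zero_free_subsums : zero_free_subsums (@bvar F n).
Proof.
move=> A A_neq0; rewrite /bvar -rmorph_sum tofrac_eq0; apply/negP => /eqP sum0.
have := congr1 (meval (fun _ => 1)) sum0; rewrite raddf_sum raddf0 => /eqP.
rewrite (eq_bigr (fun _ => 1)) => [|i _]; last exact: mevalXU.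
by rewrite sumr_const ((pcharf0P _).1 charF0) cards_eq0 (negPf A_neq0).
Qed.

End Indeterminates.

Theorem lemmaA5 (F : fieldType) (n : nat) (charF0 : [pchar F] =i pred0) :
  \sum_(s : 'S_n)
     (-1) ^+ odd_perm s /
       \prod_(k < n) (\sum_(i < n | (i <= k)%N) bvar F (s i))
  = 2%:R ^+ n *
      (\prod_(i < n) \prod_(j < n | (i < j)%N) (bvar F j - bvar F i)) /
      (\prod_(i < n) \prod_(j < n | (i <= j)%N) (bvar F i + bvar F j)).
Proof.
have := alt_prefix_sumE (@ratfun_two_neq0 F n charF0) (@bvar_inj F n)
  (@bvar_zero_free_subsums F n charF0).
by rewrite /alt_prefix_sum /vandermonde /pair_sum_prod.
Qed.
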